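(* Let $X$ be a real Hilbert space, let $\lambda>0$, and let $f\colon X\to\,]-\infty,+\infty]$ be proper, lower semicontinuous, minorized by a concave quadratic (there exist $\nu,\beta\in\mathbb R$, $\alpha\ge0$ with $f(x)\ge-\alpha\|x\|^2-\beta\|x\|+\nu$ for all $x$), and $\tfrac1\lambda$-hypoconvex. Then for every abstract subdifferential $\hat\partial$, $$\hat\partial f=\partial\Big(f+\tfrac{1}{2\lambda}\|\cdot\|^2\Big)-\tfrac1\lambda\mathrm{Id}.$$ Consequently, for such $f$ the Clarke–Rockafellar, Mordukhovich and Fréchet subdifferentials of $f$ all coincide.
   Context: $\partial$ denotes the convex-analysis subdifferential. $f$ is $\tfrac1\lambda$-hypoconvex if $f((1-\tau)x+\tau y)\le(1-\tau)f(x)+\tau f(y)+\tfrac{1}{2\lambda}\tau(1-\tau)\|x-y\|^2$ for all $x,y\in X$, $\tau\in]0,1[$. An abstract subdifferential $\hat\partial$ assigns to a function $g$ (in the class of proper lsc functions minorized by a concave quadratic) and $x\in X$ a set $\hat\partial g(x)\subseteq X$ such that: (a) $\hat\partial g=\partial g$ if $g$ is proper lsc convex; (b) $\hat\partial g=\nabla g$ if $g$ is continuously differentiable; (c) $0\in\hat\partial g(x)$ if $g$ attains a local minimum at $x\in\operatorname{dom}g$; (d) for every $\beta\in\mathbb R$ and $x\in X$, $\hat\partial\big(g+\beta\tfrac{\|\cdot-x\|^2}{2}\big)=\hat\partial g+\beta(\mathrm{Id}-x)$. The Clarke–Rockafellar, Mordukhovich and Fréchet subdifferentials satisfy (a)–(d).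 *)

From HB Require Import structures.
From mathcomp Require Import all_boot all_order all_algebra.
From mathcomp Require Import all_classical all_reals all_analysis.
Set Implicit Arguments. Unset Strict Implicit. Unset Printing Implicit Defensive.
Import Order.TTheory GRing.Theory Num.Theory.
Import numFieldNormedType.Exports.
Local Open Scope classical_set_scope.
Local Open Scope ring_scope.

Section Defs.
Context {R : realType} {X : normedModType R}.

(* ip is an inner product on X inducing the norm of X. Together with the
   completeness of X (a completeNormedModType) this makes X a real Hilbert space. *)
Definition is_inner_product (ip : X -> X -> R) : Prop :=
  [/\ (forall x y, ip x y = ip y x),
      (forall a x y z, ip (a *: x + y) z = a * ip x z + ip y z)
    & (forall x, ip x x = `|x| ^+ 2)].

Local Open Scope ereal_scope.

Definition never_minfty (f : X -> \bar R) := forall x, f x != -oo.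

Definition proper_fun (f : X -> \bar R) :=
  never_minfty f /\ exists x, f x < +oo.

Definition minorized_concave_quad (f : X -> \bar R) :=
  exists (nu beta alpha : R), (0 <= alpha)%R /\
    forall x, ((- alpha * `|x| ^+ 2 - beta * `|x| + nu)%R)%:E <= f x.

Definition admissible (f : X -> \bar R) :=
  [/\ proper_fun f, lower_semicontinuous f & minorized_concave_quad f].

Definition convex_efun (f : X -> \bar R) :=
  forall (x y : X) (t : R), (0 < t < 1)%R ->
    f (((1 - t) *: x + t *: y)%R) <= (1 - t)%:E * f x + t%:E * f y.

Definition hypoconvex (lambda : R) (f : X -> \bar R) :=
  forall (x y : X) (t : R), (0 < t < 1)%R ->
    f (((1 - t) *: x + t *: y)%R) <=
      (1 - t)%:E * f x + t%:E * f y
      + ((2 * lambda)^-1 * t * (1 - t) * `|x - y| ^+ 2)%:E.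

Definition csubdiff (ip : X -> X -> R) (f : X -> \bar R) (x : X) : set X :=
  [set u | f x \is a fin_num /\ forall y, f x + (ip u (y - x)%R)%:E <= f y].

Definition C1_with_gradient (ip : X -> X -> R) (f : X -> \bar R) (grad : X -> X) :=
  exists h : X -> R^o, [/\ (forall x, f x = (h x)%:E),
     (forall x, differentiable h x /\ forall v, 'd h x v = ip (grad x) v)
   & continuous grad].

Local Close Scope ereal_scope.

Definition abstract_subdiff (ip : X -> X -> R)
    (sd : (X -> \bar R) -> X -> set X) : Prop :=
  [/\ (* (a) *) (forall g, admissible g -> convex_efun g -> sd g = csubdiff ip g),
      (* (b) *) (forall g grad, admissible g -> C1_with_gradient ip g grad ->
                   sd g = fun x => [set grad x]),
      (* (c) *) (forall g x, admissible g -> (g x < +oo)%E ->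
                   (\forall y \near x, (g x <= g y)%E) -> sd g x 0)
    & (* (d) *) (forall g (beta : R) (x0 : X), admissible g ->
                   sd (fun y => (g y + (beta * (`|y - x0| ^+ 2 / 2))%:E)%E) =
                   fun x => (fun u => u + beta *: (x - x0)) @` sd g x)].

End Defs.

(** Adding [q := |.|^2/(2 lambda)] to a [1/lambda]-hypoconvex [f] gives a convex
    [g := f + q]: in an inner product space the convexity defect of [q] is exactly
    the term [t(1-t)|x-y|^2/(2 lambda)] allowed by hypoconvexity.  Since [f = g - q],
    axiom (d) pulls the quadratic out of any abstract subdifferential of [f], and
    axiom (a) identifies the abstract subdifferential of the convex [g] with its
    convex subdifferential, so the result does not depend on the abstract
    subdifferential. *)

From HB Require Import structures.
From mathcomp Require Import all_boot all_order all_algebra.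
From mathcomp Require Import all_classical all_reals all_analysis.
From mathcomp Require Import ring lra.
Import Order.TTheory GRing.Theory Num.Theory.
Import numFieldNormedType.Exports.
Local Open Scope classical_set_scope.
Local Open Scope ring_scope.

Section lower_semicontinuousD.
Context {T : topologicalType} {R : realType}.

Lemma lower_semicontinuousD_continuous (f : T -> \bar R) (h : T -> R) :
  lower_semicontinuous f -> continuous h ->
  lower_semicontinuous (fun y => (f y + (h y)%:E)%E).
Proof.
move=> lsc_f cont_h x a a_lt.
have [b b_lt_fx ab_lt_hx] : exists2 b, (b%:E < f x)%E & a - b < h x.
  move: a_lt; case: (f x) => [r| |] //= a_lt.
    exists ((r + a - h x) / 2); rewrite ?lte_fin; move: a_lt; rewrite lte_fin; lra.
  by exists (a - h x + 1); rewrite ?ltey //; lra.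
have [V nV fV] := lsc_f x b b_lt_fx.
exists (V `&` [set y | a - b < h y]).
  by apply: filterI => //; exact: cvgr_gt _ (cont_h x) _ ab_lt_hx.
move=> y [/fV + /= ab_lt_hy]; case: (f y) => [s| |] //= b_lt_s.
  by rewrite lte_fin; move: b_lt_s; rewrite lte_fin; lra.
by rewrite ltey.
Qed.

End lower_semicontinuousD.

Section admissible.
Context {R : realType} {X : normedModType R}.

Lemma admissibleD_nonneg_continuous (f : X -> \bar R) (h : X -> R) :
  admissible f -> (forall x, 0 <= h x) -> continuous h ->
  admissible (fun y => (f y + (h y)%:E)%E).
Proof.
move=> [[f_nminfty [x0 fx0_lt]] lsc_f [nu [beta [alpha [alpha_ge0 f_minor]]]]] h_ge0 cont_h.
split.
- split=> [y|]; first by case: (f y) (f_nminfty y).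
  by exists x0; case: (f x0) fx0_lt => //= r _; rewrite ltey.
- exact: lower_semicontinuousD_continuous.
- exists nu, beta, alpha; split=> // x.
  by apply: le_trans (f_minor x) _; rewrite leeDl // lee_fin.
Qed.

Lemma continuous_sqr_norm_div (c : R) : continuous (fun y : X => `|y| ^+ 2 / c).
Proof.
move=> x; apply: cvgMr_tmp; rewrite expr2; under eq_fun do rewrite expr2.
by apply: cvgM; exact: norm_continuous.
Qed.

End admissible.

Section inner_product.
Context {R : realType} {X : normedModType R} {ip : X -> X -> R}.
Hypothesis ip_inner : is_inner_product ip.

Lemma ipDl x y z : ip (x + y) z = ip x z + ip y z.
Proof. by case: ip_inner => _ ipl _; have := ipl 1 x y z; rewrite scale1r mul1r. Qed.

Lemma ip0l z : ip 0 z = 0.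
Proof. by have := ipDl 0 0 z; rewrite addr0 -{1}[ip 0 z]addr0 => /addrI. Qed.

Lemma ipZl a x z : ip (a *: x) z = a * ip x z.
Proof. by case: ip_inner => _ ipl _; rewrite -(addr0 (a *: x)) ipl ip0l addr0. Qed.

Lemma ipNl x z : ip (- x) z = - ip x z.
Proof. by rewrite -scaleN1r ipZl mulN1r. Qed.

Lemma sqr_norm_convex_comb (t : R) (x y : X) :
  `|(1 - t) *: x + t *: y| ^+ 2 =
  (1 - t) * `|x| ^+ 2 + t * `|y| ^+ 2 - t * (1 - t) * `|x - y| ^+ 2.
Proof.
case: ip_inner => ipC _ ip_norm; rewrite -!ip_norm.
rewrite !ipDl !ipNl !ipZl (ipC x) (ipC y) (ipC x (x - y)) (ipC y (x - y)).
by rewrite !ipDl !ipNl !ipZl (ipC y x); ring.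
Qed.

Lemma hypoconvex_add_sqr_norm_convex (lambda : R) (f : X -> \bar R) :
  0 < lambda -> hypoconvex lambda f ->
  convex_efun (fun y => (f y + (`|y| ^+ 2 / (2 * lambda))%:E)%E).
Proof.
move=> lambda_gt0 hypo_f x y t t01.
have quad_comb : (2 * lambda)^-1 * t * (1 - t) * `|x - y| ^+ 2
    + `|(1 - t) *: x + t *: y| ^+ 2 / (2 * lambda)
    = (1 - t) * (`|x| ^+ 2 / (2 * lambda)) + t * (`|y| ^+ 2 / (2 * lambda)).
  by rewrite sqr_norm_convex_comb; field; rewrite gt_eqF.
apply: le_trans (leeD2r _ (hypo_f x y t t01)) _.
rewrite -addeA -EFinD quad_comb.
by rewrite !muleDr ?fin_num_adde_defl // -!EFinM addeACA -EFinD.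
Qed.

Lemma abstract_subdiff_hypoconvex sd (lambda : R) (f : X -> \bar R) :
  abstract_subdiff ip sd -> 0 < lambda -> admissible f -> hypoconvex lambda f ->
  forall x, sd f x = (fun u => u - lambda^-1 *: x) @`
    csubdiff ip (fun y => (f y + (`|y| ^+ 2 / (2 * lambda))%:E)%E) x.
Proof.
move=> [sd_convex _ _ sd_quad] lambda_gt0 f_adm hypo_f x.
set g := fun y => (f y + (`|y| ^+ 2 / (2 * lambda))%:E)%E.
have g_adm : admissible g.
  apply: admissibleD_nonneg_continuous => //; last exact: continuous_sqr_norm_div.
  by move=> y; apply: divr_ge0; rewrite ?exprn_ge0 ?mulr_ge0 // ltW.
have -> : f = fun y => (g y + (- lambda^-1 * (`|y - 0| ^+ 2 / 2))%:E)%E.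
  apply: funext => y; rewrite /g subr0 -addeA -EFinD.
  suff -> : `|y| ^+ 2 / (2 * lambda) + - lambda^-1 * (`|y| ^+ 2 / 2) = 0 by rewrite adde0.
  by field; rewrite gt_eqF.
rewrite sd_quad // sd_convex //; last exact: hypoconvex_add_sqr_norm_convex.
by congr (_ @` _); apply: funext => u; rewrite subr0 scaleNr.
Qed.

End inner_product.

Theorem proposition6p2 (R : realType) (X : completeNormedModType R)
  (ip : X -> X -> R) (lambda : R) (f : X -> \bar R) :
  is_inner_product ip -> 0 < lambda ->
  proper_fun f -> lower_semicontinuous f -> minorized_concave_quad f ->
  hypoconvex lambda f ->
  (forall sd, abstract_subdiff ip sd ->
     forall x, sd f x =
       (fun u => u - lambda^-1 *: x) @`
         csubdiff ip (fun y => (f y + (`|y| ^+ 2 / (2 * lambda))%:E)%E) x)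
  /\
  (forall sd1 sd2, abstract_subdiff ip sd1 -> abstract_subdiff ip sd2 ->
     sd1 f = sd2 f).
Proof.
move=> ip_inner lambda_gt0 f_proper lsc_f f_minor hypo_f.
have f_adm : admissible f by [].
have sd_f sd sd_abs :=
  abstract_subdiff_hypoconvex ip_inner sd lambda f sd_abs lambda_gt0 f_adm hypo_f.
split=> [sd sd_abs|sd1 sd2 sd1_abs sd2_abs]; first exact: sd_f.
by apply: funext => x; rewrite (sd_f _ sd1_abs) (sd_f _ sd2_abs).
Qed.
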